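(* Let $M\ge1$ be an integer and for $j=0,\ldots,M-1$ let $f_j:\mathbb{Z}_M\to\mathbb{Z}_2$ be the Grover function $f_j(x)=\delta_{xj}$. Then the standard oracle operators $U_{f_0},\ldots,U_{f_{M-1}}$ are unambiguously distinguishable; indeed the matrix $\Gamma$ with $\Gamma_{j'j}=\#\{x\in\mathbb{Z}_M: f_{j'}(x)=f_j(x)\}$ satisfies $\det\Gamma=2^{M-1}[(M-1)^2+1]>0$.
   Context: Let $\mathcal{H}_M,\mathcal{H}_2$ be Hilbert spaces with orthonormal computational bases $\{|x\rangle\}_{x\in\mathbb{Z}_M}$, $\{|y\rangle\}_{y\in\mathbb{Z}_2}$. For $f:\mathbb{Z}_M\to\mathbb{Z}_2$ the standard oracle operator is the unitary $U_f$ on $\mathcal{H}_M\otimes\mathcal{H}_2$ with $U_f|x\rangle\otimes|y\rangle=|x\rangle\otimes|y\oplus f(x)\rangle$, $\oplus$ being addition mod 2. A finite list of unitary operators $W_1,\ldots,W_K$ on a finite-dimensional Hilbert space $\mathcal{H}$ is called unambiguously distinguishable if there exist a finite-dimensional ancilla space $\mathcal{H}_A$ and a unit vector $|\psi\rangle\in\mathcal{H}\otimes\mathcal{H}_A$ such that the vectors $(W_j\otimes\mathbb{1}_A)|\psi\rangle$ are linearly independent. *)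

(* Finite-dimensional Hilbert spaces C^n over a numeric
   algebraically closed field C (e.g. algC, or complex R for R : rcfType). *)
From HB Require Import structures.
From mathcomp Require Import all_boot all_order all_algebra.
From mathcomp Require Export mxtens.
Set Implicit Arguments. Unset Strict Implicit. Unset Printing Implicit Defensive.
Import Order.TTheory GRing.Theory Num.Theory.
Local Open Scope ring_scope.

Section Defs.
Variable C : numClosedFieldType.

Definition adjmx {m n} (A : 'M[C]_(m, n)) : 'M[C]_(n, m) := (map_mx Num.conj A)^T.

Definition unitary_mx {n} (U : 'M[C]_n) : Prop :=
  U *m adjmx U = 1%:M /\ adjmx U *m U = 1%:M.

Definition unit_vec {n} (v : 'cV[C]_n) : Prop := \sum_(i < n) `|v i 0| ^+ 2 = 1.

Definition lin_indep {K n} (v : 'I_K -> 'cV[C]_n) : Prop :=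
  row_free (\matrix_(j < K) (v j)^T).

(* The tensor product
   C^n (x) C^d is C^(n*d) via the Kronecker product [tensmx]. *)
Definition unamb_dist {K n} (W : 'I_K -> 'M[C]_n) : Prop :=
  (forall j, unitary_mx (W j)) /\
  exists (d : nat) (psi : 'cV[C]_(n * d)),
    unit_vec psi /\ lin_indep (fun j => (tensmx (W j) (1%:M : 'M[C]_d)) *m psi).

Definition ket2 {M} (x : 'I_M) (y : 'I_2) : 'cV[C]_(M * 2) :=
  delta_mx (mxtens_index (x, y)) 0.

(* standard oracle U_f |x>|y> = |x>|y (+) f x> *)
Definition oracle {M} (f : 'I_M -> 'I_2) : 'M[C]_(M * 2) :=
  \sum_(x < M) \sum_(y < 2)
     delta_mx (mxtens_index (x, (y + f x)%R)) (mxtens_index (x, y)).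
End Defs.

Definition grover {M} (j : 'I_M) : 'I_M -> 'I_2 :=
  fun x => if x == j then 1%R else 0%R.

Definition gram_count {K M} (f : 'I_K -> 'I_M -> 'I_2) : 'M[int]_K :=
  \matrix_(j', j) (#|[set x | f j' x == f j x]|)%:Z.

From HB Require Import structures.
From mathcomp Require Import all_boot all_order all_algebra.
From mathcomp Require Import perm ring.
Import Order.TTheory GRing.Theory Num.Theory.
Local Open Scope ring_scope.

(* U_f permutes the computational basis by the involution
   (x, y) |-> (x, y + f x), hence is unitary.  No ancilla is needed: for
   psi = M^(-1/2) sum_x |x>|0>, the vector U_(f_j) psi has amplitude M^(-1/2)
   on |i>|1> exactly when i = j, so the coordinates |i>|1> witness linear
   independence.  Finally Gamma = 2 I + (M - 2) J, whose determinant is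
   (2 + M (M - 2)) 2^(M-1) = ((M - 1)^2 + 1) 2^(M-1). *)

Lemma adjmx_perm (C : numClosedFieldType) n (s : 'S_n) :
  adjmx (perm_mx s : 'M[C]_n) = perm_mx s^-1.
Proof. by rewrite /adjmx map_perm_mx tr_perm_mx. Qed.

Lemma unitary_perm_mx (C : numClosedFieldType) n (s : 'S_n) :
  unitary_mx (perm_mx s : 'M[C]_n).
Proof. by rewrite /unitary_mx adjmx_perm -!perm_mxM mulgV mulVg perm_mx1. Qed.

Section OracleAsPermutation.
Variables (M : nat) (f : 'I_M -> 'I_2).

Definition oracle_index (k : 'I_(M * 2)) : 'I_(M * 2) :=
  let: (x, y) := mxtens_unindex k in mxtens_index (x, y + f x).

Lemma oracle_index_pair x y :
  oracle_index (mxtens_index (x, y)) = mxtens_index (x, y + f x).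
Proof. by rewrite /oracle_index mxtens_indexK. Qed.

Lemma oracle_indexK : involutive oracle_index.
Proof.
have addI2 (z : 'I_2) : z + z = 0 by apply/val_inj; case: z => [[|[|]]].
move=> k; case: (mxtens_indexP k) => x y.
by rewrite !oracle_index_pair -addrA addI2 addr0.
Qed.

Definition oracle_perm : 'S_(M * 2) := perm (inv_inj oracle_indexK).

Lemma oracle_perm_mx (C : numClosedFieldType) : oracle C f = perm_mx oracle_perm.
Proof.
apply/matrixP => a b; rewrite [RHS]mxE [RHS]mxE permE (inv_eq oracle_indexK).
rewrite summxE; case: (mxtens_indexP b) => x0 y0; rewrite oracle_index_pair.
rewrite (bigD1 x0) //= summxE (bigD1 y0) //= mxE eqxx andbT.
have neq x y : (x, y) != (x0, y0) ->
    (mxtens_index (x0, y0) == mxtens_index (x, y)) = false.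
  by rewrite (can_eq (@mxtens_indexK _ _)) eq_sym => /negbTE.
rewrite !big1 ?addr0 // => [x /negbTE xx0|y /negbTE yy0].
  by rewrite summxE big1 // => y _; rewrite mxE neq ?andbF // xpair_eqE xx0.
by rewrite mxE neq ?andbF // xpair_eqE yy0 andbF.
Qed.

End OracleAsPermutation.

Lemma tens_cVE (R : pzRingType) m n (v : 'cV[R]_m) (w : 'cV[R]_n) i j :
  (v *t w) (mxtens_index (i, j)) 0 = v i 0 * w j 0.
Proof. by rewrite mxE mxtens_indexK !(ord1 (_ : 'I_1)). Qed.

Lemma tensmx_mul_cV (R : comPzRingType) m n p q (A : 'M[R]_(m, n))
    (B : 'M_(p, q)) (v : 'cV_n) (w : 'cV_q) :
  (A *t B) *m (v *t w : 'cV_(n * q)) = (A *m v) *t (B *m w) :> 'cV_(m * p).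
Proof. exact (tensmx_mul A B v w). Qed.

Section UnitVectors.
Variable C : numClosedFieldType.

Lemma unit_vec_tens m n (v : 'cV[C]_m) (w : 'cV[C]_n) :
  unit_vec v -> unit_vec w -> unit_vec (v *t w).
Proof.
rewrite /unit_vec => v1 w1; rewrite -[1]mulr1 -{1}v1 -w1 mulr_sum.
apply: eq_bigr => k _; case: (mxtens_indexP k) => i j.
by rewrite tens_cVE mxtens_indexK normrM exprMn.
Qed.

Lemma unit_vec_delta n (i : 'I_n) : unit_vec (delta_mx i 0 : 'cV[C]_n).
Proof.
rewrite /unit_vec (bigD1 i) //= big1 ?addr0 => [|k /negbTE ki].
  by rewrite mxE !eqxx normr1 expr1n.
by rewrite mxE ki normr0 expr0n.
Qed.

Lemma unit_vec_uniform n :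
  (0 < n)%N -> unit_vec (const_mx (sqrtC n%:R^-1) : 'cV[C]_n).
Proof.
move=> n_gt0; rewrite /unit_vec.
under eq_bigr => k _ do rewrite mxE -normrX sqrtCK normfV normr_nat.
by rewrite sumr_const card_ord -[_ *+ n]mulr_natr mulVf // pnatr_eq0 -lt0n.
Qed.

End UnitVectors.

Lemma lin_indep_coord (C : numClosedFieldType) K n (v : 'I_K -> 'cV[C]_n)
    (r : 'I_K -> 'I_n) (c : C) :
  c != 0 -> (forall i j, v j (r i) 0 = c * (i == j)%:R) -> lin_indep v.
Proof.
move=> c_neq0 vr; apply/row_freeP; exists (\matrix_(k, i) ((k == r i)%:R / c)).
apply/matrixP => j i; rewrite !mxE (bigD1 (r i)) //= big1 ?addr0 => [|k /negbTE ki].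
  by rewrite !mxE eqxx vr mul1r mulrAC divff // mul1r eq_sym.
by rewrite !mxE ki mul0r mulr0.
Qed.

Section GroverWitness.
Variables (C : numClosedFieldType) (M : nat).
Hypothesis M_gt0 : (0 < M)%N.

Let c : C := sqrtC M%:R^-1.
Let phi : 'cV[C]_(M * 2) := (const_mx c : 'cV_M) *t (delta_mx 0 0 : 'cV_2).

Lemma grover_oracle_phi j i :
  (oracle C (grover j) *m phi) (mxtens_index (i, 1)) 0 = c * (i == j)%:R.
Proof.
rewrite oracle_perm_mx -row_permE mxE permE oracle_index_pair tens_cVE !mxE.
by rewrite /grover; case: (i == j).
Qed.

Lemma grover_unamb : unamb_dist (fun j : 'I_M => oracle C (grover j)).
Proof.
split=> [j|]; first by rewrite oracle_perm_mx; apply: unitary_perm_mx.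
exists 1%N, (phi *t (delta_mx 0 0 : 'cV_1)); split.
  by do 2?apply: unit_vec_tens; [apply: unit_vec_uniform | apply: unit_vec_delta..].
apply: (@lin_indep_coord _ _ _ _ (fun i => mxtens_index (mxtens_index (i, 1), 0)) c).
  by rewrite sqrtC_eq0 invr_eq0 pnatr_eq0 -lt0n.
move=> i j; rewrite tensmx_mul_cV mul1mx tens_cVE grover_oracle_phi.
by rewrite mxE eqxx mulr1.
Qed.

End GroverWitness.

Section ScalarPlusConst.
Variables (R : comNzRingType) (n : nat).

Let lcol0 : 'M[R]_n.+1 := \matrix_(i, j) ((i != 0) && (j == 0))%:R.

Lemma mul_lcol0_mx (X : 'M[R]_n.+1) :
  lcol0 *m X = \matrix_(i, j) ((i != 0)%:R * X 0 j).
Proof.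
apply/matrixP => i j; rewrite !mxE (bigD1 0) //= big1 ?addr0 => [|k /negbTE k0].
  by rewrite mxE eqxx andbT.
by rewrite mxE k0 andbF mul0r.
Qed.

Lemma mulmx_lcol0 (X : 'M[R]_n.+1) :
  X *m lcol0 = \matrix_(i, j) ((j == 0)%:R * \sum_(k | k != 0) X i k).
Proof.
apply/matrixP => i j; rewrite !mxE mulr_sumr (bigID (fun k => k != 0)) /=.
rewrite [X in _ + X]big1 ?addr0 => [|k /negPn/eqP->].
  by apply: eq_bigr => k k0; rewrite mxE k0 mulrC.
by rewrite mxE eqxx mulr0.
Qed.

(* Right multiplication by 1 + lcol0 adds the other columns to column 0, left
   multiplication by 1 - lcol0 subtracts row 0 from the other rows; this makes
   the matrix triangular, and lcol0 ^+ 2 = 0 makes the two factors cancel in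
   the determinant. *)
Lemma det_scalar_add_const (a b : R) :
  \det (\matrix_(i, j < n.+1) (a *+ (i == j) + b)) = (a + n.+1%:R * b) * a ^+ n.
Proof.
have lcol0_sq : lcol0 *m lcol0 = 0.
  by apply/matrixP => i j; rewrite mul_lcol0_mx !mxE eqxx /= mulr0.
have det_factors : \det (1%:M - lcol0) * \det (1%:M + lcol0) = 1.
  rewrite -det_mulmx mulmxDr !mulmxBl !mulmx1 mul1mx lcol0_sq.
  by rewrite subr0 addrNK det1.
rewrite -[LHS]mul1r -{1}det_factors mulrAC -!det_mulmx.
set X := (1%:M - lcol0) *m _; set U := X *m _.
have XE i j : i != 0 -> X i j = a *+ (i == j) - a *+ (j == 0).
  move=> i0; rewrite /X mulmxBl mul1mx mul_lcol0_mx !mxE i0 mul1r [0 == _]eq_sym.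
  by rewrite opprD addrACA subrr addr0.
have UE i j : U i j = X i j + (j == 0)%:R * \sum_(k | k != 0) X i k.
  by rewrite /U mulmxDr mulmx1 mulmx_lcol0 !mxE.
have U00 : U 0 0 = a + n.+1%:R * b.
  rewrite UE eqxx mul1r -(bigD1 0 (P := xpredT)) //= /X mulmxBl mul1mx.
  under eq_bigr => k _ do rewrite mul_lcol0_mx !mxE eqxx mul0r subr0.
  rewrite big_split /= sumr_const card_ord -[b *+ _]mulr_natl.
  rewrite (bigD1 0) //= big1 ?addr0 // => k /negbTE.
  by rewrite eq_sym => ->.
have U_lower i j : i != 0 -> U i j = a *+ (i == j).
  move=> i0; rewrite UE XE //.
  have [->|_] := eqVneq j 0; last by rewrite mul0r addr0 mulr0n subr0.
  rewrite (bigD1 i) //= big1 => [|k /andP[/negbTE k0 /negbTE ki]].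
    by rewrite XE // (negbTE i0) eqxx mulr0n addr0 mul1r sub0r subr0 addNr.
  by rewrite XE // eq_sym ki k0 subr0.
rewrite -det_tr det_trig; last first.
  apply/is_trig_mxP => i j lt_ij; rewrite mxE U_lower -val_eqE /=.
    by rewrite gtn_eqF.
  by rewrite -lt0n (leq_ltn_trans _ lt_ij).
rewrite big_ord_recl mxE U00; congr (_ * _).
rewrite -[in RHS](card_ord n) -prodr_const; apply: eq_bigr => k _.
by rewrite mxE U_lower ?eqxx.
Qed.

End ScalarPlusConst.

Lemma gram_count_grover M (i j : 'I_M) :
  gram_count (fun j : 'I_M => grover j) i j = 2 *+ (i == j) + (M%:Z - 2).
Proof.
rewrite mxE; have [<-|ij] := eqVneq i j.
  rewrite (_ : [set x | _] = setT) ?cardsT ?card_ord.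
    by rewrite addrC subrK.
  by apply/setP => x; rewrite !inE eqxx.
have -> : [set x | grover i x == grover j x] = ~: [set i; j].
  apply/setP => x; rewrite !inE /grover.
  have [->|_] := eqVneq x i; first by rewrite (negbTE ij).
  by case: (x == j).
have cardC := cardsC [set i; j]; rewrite cards2 ij card_ord in cardC.
by rewrite -[in RHS]cardC PoszD /=; ring.
Qed.

Lemma det_gram_count_grover M : (0 < M)%N ->
  \det (gram_count (fun j : 'I_M => grover j)) =
    (2 ^ (M - 1) * ((M - 1) ^ 2 + 1))%:Z.
Proof.
case: M => [//|n] _.
have -> : gram_count (fun j : 'I_n.+1 => grover j) =
    \matrix_(i, j) (2 *+ (i == j) + (n.+1%:Z - 2)).
  by apply/matrixP => i j; rewrite gram_count_grover mxE.
rewrite det_scalar_add_const subn1 /= PoszM PoszD -!natz !natrX [n.+1%:R]natz.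
ring.
Qed.

Theorem mainTheorem6 (C : numClosedFieldType) (M : nat) (hM : (1 <= M)%N) :
  unamb_dist (fun j : 'I_M => oracle C (grover j)) /\
  \det (gram_count (fun j : 'I_M => grover j)) =
    (2 ^ (M - 1) * ((M - 1) ^ 2 + 1))%:Z /\
  0 < \det (gram_count (fun j : 'I_M => grover j)).
Proof.
have detE := det_gram_count_grover M hM.
split; first exact: grover_unamb C M hM.
by rewrite detE ltz_nat muln_gt0 expn_gt0 addn1.
Qed.
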